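(* Let $Q_1,Q_2\in\mathbb{R}^{(m+n)\times(m+n)}$ be permutation matrices with $Q_1Q_2^{\mathsf T}=\begin{bmatrix}Q_{11}&Q_{12}\\Q_{21}&Q_{22}\end{bmatrix}$ ($Q_{11}\in\mathbb{R}^{m\times m}$, $Q_{22}\in\mathbb{R}^{n\times n}$). For $X\in\mathbb{C}^{n\times m}$, $Y\in\mathbb{C}^{m\times n}$ set $$W=Q_{22}-XQ_{12}+(Q_{21}-XQ_{11})Y\in\mathbb{C}^{n\times n},\qquad \widetilde W=Q_{11}^{\mathsf T}-YQ_{12}^{\mathsf T}+(Q_{21}^{\mathsf T}-YQ_{22}^{\mathsf T})X\in\mathbb{C}^{m\times m}.$$ Then $W$ is nonsingular if and only if $\widetilde W$ is nonsingular. Moreover, when they are nonsingular, for any $E\in\mathbb{C}^{m\times m}$, $F\in\mathbb{C}^{n\times n}$ the two formulas $$E_+=E\big[Q_{11}+(Q_{11}Y+Q_{12})W^{-1}(XQ_{11}-Q_{21})\big]E,\ \ F_+=FW^{-1}F,\ \ X_+=X+FW^{-1}(XQ_{11}-Q_{21})E,\ \ Y_+=Y+E(Q_{11}Y+Q_{12})W^{-1}F$$ and $$E_+=E\widetilde W^{-1}E,\ \ F_+=F\big[Q_{22}^{\mathsf T}+(Q_{22}^{\mathsf T}X+Q_{12}^{\mathsf T})\widetilde W^{-1}(YQ_{22}^{\mathsf T}-Q_{21}^{\mathsf T})\big]F,\ \ X_+=X+F(Q_{22}^{\mathsf T}X+Q_{12}^{\mathsf T})\widetilde W^{-1}E,\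 \ Y_+=Y+E\widetilde W^{-1}(YQ_{22}^{\mathsf T}-Q_{21}^{\mathsf T})F$$ produce the same quadruple $(E_+,F_+,X_+,Y_+)$. *)

From HB Require Import structures.
From mathcomp Require Import all_boot all_order all_algebra.
From mathcomp Require Import reals complex.
Set Implicit Arguments. Unset Strict Implicit. Unset Printing Implicit Defensive.
Import Order.TTheory GRing.Theory Num.Theory.
Local Open Scope ring_scope.

Definition cmx (R : realType) (p q : nat) (A : 'M[R]_(p, q)) : 'M[R[i]]_(p, q) :=
  map_mx (fun x : R => (x%:C)%C) A.

(** Writing [Q = Q1 Q2^T = [Q11 Q12; Q21 Q22]], a block elimination gives
    [[I 0; -X I] Q [I Y; 0 I] = [Q11, Q11 Y + Q12; Q21 - X Q11, W]], and since
    the permutation matrix [Q] is orthogonal the inverse of this matrix is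
    [[I -Y; 0 I] Q^T [I 0; X I] = [Wt, Q21^T - Y Q22^T; Q12^T + Q22^T X, Q22^T]].
    For an invertible block matrix the lower-right block is invertible iff the
    upper-left block of the inverse is, and the Schur complement formulas
    express each inverse through the other; the two update formulas are these
    identities multiplied on both sides by [E] and [F]. *)
From HB Require Import structures.
From mathcomp Require Import all_boot all_order all_algebra.
From mathcomp Require Import fingroup perm.
From mathcomp Require Import reals complex.
Set Implicit Arguments. Unset Strict Implicit. Unset Printing Implicit Defensive.
Import Order.TTheory GRing.Theory Num.Theory.
Local Open Scope ring_scope.

Lemma mulmx1_invmx (K : fieldType) k (M N : 'M[K]_k) :
  M *m N = 1%:M -> invmx M = N.
Proof.
move=> MN; have [uM _] := mulmx1_unit MN.
by rewrite -[RHS]mul1mx -(mulVmx uM) -mulmxA MN mulmx1.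
Qed.

Lemma trmx_perm_mxK (R : pzRingType) k (P : 'M[R]_k) :
  is_perm_mx P -> P^T *m P = 1%:M.
Proof. by case/is_perm_mxP=> s ->; rewrite tr_perm_mx -perm_mxM mulVg perm_mx1. Qed.

Lemma is_perm_cmx (R : realType) k (Q1 Q2 : 'M[R]_k) :
  is_perm_mx Q1 -> is_perm_mx Q2 -> is_perm_mx (cmx (Q1 *m Q2^T)).
Proof.
move=> /is_perm_mxP[s1 ->] /is_perm_mxP[s2 ->].
by rewrite /cmx tr_perm_mx -perm_mxM map_perm_mx perm_mx_is_perm.
Qed.

Section BlockElimination.
Variables (R : pzRingType) (m n : nat).

Definition lower_unimx (X : 'M[R]_(n, m)) : 'M[R]_(m + n) :=
  block_mx 1%:M 0 X 1%:M.

Definition upper_unimx (Y : 'M[R]_(m, n)) : 'M[R]_(m + n) :=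
  block_mx 1%:M Y 0 1%:M.

Lemma lower_unimxN X : lower_unimx X *m lower_unimx (- X) = 1%:M.
Proof.
by rewrite mulmx_block !(mul1mx, mulmx1, mul0mx, mulmx0, addr0, add0r, addrN, addNr)
  -scalar_mx_block.
Qed.

Lemma upper_unimxN Y : upper_unimx Y *m upper_unimx (- Y) = 1%:M.
Proof.
by rewrite mulmx_block !(mul1mx, mulmx1, mul0mx, mulmx0, addr0, add0r, addrN, addNr)
  -scalar_mx_block.
Qed.

Variables (Q : 'M[R]_(m + n)) (X : 'M[R]_(n, m)) (Y : 'M[R]_(m, n)).

Lemma mul_lower_upper_unimx :
  lower_unimx (- X) *m Q *m upper_unimx Y =
  block_mx (ulsubmx Q) (ulsubmx Q *m Y + ursubmx Q)
           (dlsubmx Q - X *m ulsubmx Q)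
           (drsubmx Q - X *m ursubmx Q + (dlsubmx Q - X *m ulsubmx Q) *m Y).
Proof.
rewrite -[Q in LHS]submxK !mulmx_block.
rewrite !(mul1mx, mulmx1, mul0mx, mulmx0, addr0, add0r, mulNmx).
by rewrite !(addrC (- (X *m _))) (addrC _ (drsubmx Q - _)).
Qed.

Lemma mul_upper_lower_unimx_tr :
  upper_unimx (- Y) *m Q^T *m lower_unimx X =
  block_mx ((ulsubmx Q)^T - Y *m (ursubmx Q)^T
              + ((dlsubmx Q)^T - Y *m (drsubmx Q)^T) *m X)
           ((dlsubmx Q)^T - Y *m (drsubmx Q)^T)
           ((ursubmx Q)^T + (drsubmx Q)^T *m X) (drsubmx Q)^T.
Proof.
rewrite -[Q in LHS]submxK tr_block_mx !mulmx_block.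
by rewrite !(mul1mx, mulmx1, mul0mx, mulmx0, addr0, add0r, mulNmx).
Qed.

Lemma mul_block_elimination : Q^T *m Q = 1%:M ->
  (upper_unimx (- Y) *m Q^T *m lower_unimx X) *m
  (lower_unimx (- X) *m Q *m upper_unimx Y) = 1%:M.
Proof.
move=> QtQ; rewrite !mulmxA -(mulmxA _ (lower_unimx X)) lower_unimxN mulmx1.
by rewrite -(mulmxA _ Q^T) QtQ mulmx1 -{2}(opprK Y) upper_unimxN.
Qed.

End BlockElimination.

Section BlockInverse.
Variables (K : fieldType) (m n : nat).
Variables (A A' : 'M[K]_m) (B B' : 'M[K]_(m, n)).
Variables (C C' : 'M[K]_(n, m)) (D D' : 'M[K]_n).
Hypothesis block_inv : block_mx A' B' C' D' *m block_mx A B C D = 1%:M.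

Let block_eqs :
  [/\ A' *m A + B' *m C = 1%:M, A' *m B + B' *m D = 0,
      C' *m B + D' *m D = 1%:M & C *m A' + D *m C' = 0].
Proof.
have inv_block := mulmx1C block_inv.
move: block_inv inv_block; rewrite !mulmx_block scalar_mx_block.
by case/eq_block_mx=> ul ur _ dr /eq_block_mx[_ _ dl _].
Qed.

Lemma mulmx_ulsub_schur : D \in unitmx -> A' *m (A - B *m invmx D *m C) = 1%:M.
Proof.
have [e1 e2 _ _] := block_eqs; move=> uD.
have AB : A' *m B = - (B' *m D) by apply/eqP; rewrite -addr_eq0 e2.
by rewrite mulmxBr !mulmxA AB !mulNmx -(mulmxA B') (mulmxV uD) mulmx1 opprK.
Qed.

Lemma mulmx_schur_drsub : A' \in unitmx -> (D' - C' *m invmx A' *m B') *m D = 1%:M.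
Proof.
have [_ e2 e3 _] := block_eqs; move=> uA.
have B'D : B' *m D = - (A' *m B) by apply/eqP; rewrite -addr_eq0 addrC e2.
by rewrite mulmxBl -!mulmxA B'D !mulmxN !mulmxA (mulmxKV uA) opprK addrC.
Qed.

Lemma unitmx_block_inv : (D \in unitmx) = (A' \in unitmx).
Proof.
apply/idP/idP=> u.
  by case: (mulmx1_unit (mulmx_ulsub_schur u)).
by case: (mulmx1_unit (mulmx_schur_drsub u)).
Qed.

Lemma invmx_ulsub_block_inv :
  D \in unitmx -> invmx A' = A - B *m invmx D *m C.
Proof. by move=> uD; apply/mulmx1_invmx/mulmx_ulsub_schur. Qed.

Lemma invmx_drsub_block_inv :
  A' \in unitmx -> invmx D = D' - C' *m invmx A' *m B'.
Proof. by move=> uA; apply/mulmx1_invmx/mulmx1C/mulmx_schur_drsub. Qed.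

Lemma invmx_mul_dlsub_block_inv :
  D \in unitmx -> invmx D *m C = - (C' *m invmx A').
Proof.
have [_ _ _ e4] := block_eqs; move=> uD.
have uA : A' \in unitmx by rewrite -unitmx_block_inv.
rewrite -mulNmx; apply: (canRL (mulmxK uA)); rewrite -mulmxA.
apply: (canLR (mulKmx uD)); rewrite mulmxN; apply/eqP.
by rewrite -addr_eq0 e4.
Qed.

Lemma mul_ursub_invmx_block_inv :
  D \in unitmx -> B *m invmx D = - (invmx A' *m B').
Proof.
have [_ e2 _ _] := block_eqs; move=> uD.
have uA : A' \in unitmx by rewrite -unitmx_block_inv.
rewrite -mulmxN; apply: (canRL (mulKmx uA)); rewrite mulmxA.
apply: (canLR (mulmxK uD)); rewrite mulNmx; apply/eqP.
by rewrite -addr_eq0 e2.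
Qed.

End BlockInverse.

Theorem mainTheorem3 (R : realType) (m n : nat) (Q1 Q2 : 'M[R]_(m + n))
  (hQ1 : is_perm_mx Q1) (hQ2 : is_perm_mx Q2)
  (X : 'M[R[i]]_(n, m)) (Y : 'M[R[i]]_(m, n)) :
  let Q : 'M[R[i]]_(m + n, m + n) := cmx (Q1 *m Q2^T) in
  let Q11 := ulsubmx Q in let Q12 := ursubmx Q in
  let Q21 := dlsubmx Q in let Q22 := drsubmx Q in
  let W : 'M[R[i]]_n := Q22 - X *m Q12 + (Q21 - X *m Q11) *m Y in
  let Wt : 'M[R[i]]_m := Q11^T - Y *m Q12^T + (Q21^T - Y *m Q22^T) *m X in
  (W \in unitmx <-> Wt \in unitmx) /\
  (W \in unitmx -> forall (E : 'M[R[i]]_m) (F : 'M[R[i]]_n),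
     [/\ E *m (Q11 + (Q11 *m Y + Q12) *m invmx W *m (X *m Q11 - Q21)) *m E
           = E *m invmx Wt *m E,
         F *m invmx W *m F
           = F *m (Q22^T + (Q22^T *m X + Q12^T) *m invmx Wt *m (Y *m Q22^T - Q21^T)) *m F,
         X + F *m invmx W *m (X *m Q11 - Q21) *m E
           = X + F *m (Q22^T *m X + Q12^T) *m invmx Wt *m E
       & Y + E *m (Q11 *m Y + Q12) *m invmx W *m F
           = Y + E *m invmx Wt *m (Y *m Q22^T - Q21^T) *m F]).
Proof.
move=> Q Q11 Q12 Q21 Q22 W Wt.
have QtQ : Q^T *m Q = 1%:M := trmx_perm_mxK (is_perm_cmx hQ1 hQ2).
have := mul_block_elimination X Y QtQ.
rewrite mul_lower_upper_unimx mul_upper_lower_unimx_tr.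
rewrite -/W -/Wt => inv.
split; first by rewrite (unitmx_block_inv inv).
move=> uW E F; split.
- by rewrite (invmx_ulsub_block_inv inv uW) -(opprB Q21) mulmxN.
- rewrite (invmx_drsub_block_inv inv) -?(unitmx_block_inv inv) //.
  by rewrite -(opprB Q21^T) mulmxN (addrC (Q22^T *m X)).
- rewrite -(opprB Q21) -(mulmxA F) mulmxN (invmx_mul_dlsub_block_inv inv uW).
  by rewrite opprK (addrC (Q22^T *m X)) !mulmxA.
- rewrite -(opprB Q21^T) -(mulmxA E) (mul_ursub_invmx_block_inv inv uW).
  by rewrite !mulmxN !mulNmx !mulmxA.
Qed.
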